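(* Let $k\ge 1$ and let $D_k=3k^2+3k+1$. Let $d=D_kq+\beta$ with integers $q\ge 1$ and $0\le \beta\le D_k-1$. Then \[ \gamma_k(T_d)\le \begin{cases} \dfrac{D_kq^2+(6k+3)q+2}{2}, & \text{if } \beta=0,\\[6pt] \dfrac{D_k(q+1)^2+(6k+3)(q+1)+2}{2}, & \text{if } \beta>0. \end{cases} \]
   Context: Let $\alpha_1=(1,0)$ and $\alpha_2=(-\tfrac12,\tfrac{\sqrt3}{2})$. The triangular lattice $T_\infty$ is the infinite graph with vertex set $\{a\alpha_1+b\alpha_2 : a,b\in\mathbb Z\}$, two vertices being adjacent iff their Euclidean distance is $1$. For an integer $d\ge 0$, the triangular matchstick graph $T_d$ is the subgraph of $T_\infty$ induced by the vertices $a\alpha_1+b\alpha_2$ with $0\le b\le a\le d$. For a connected graph $G$, a set $D\subseteq V(G)$ is a distance-$k$ dominating set if every vertex of $G$ is at (graph) distance at most $k$ from some vertex of $D$; $\gamma_k(G)$ is the minimum size of such a set. *)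

From mathcomp Require Import all_boot.
Set Implicit Arguments. Unset Strict Implicit. Unset Printing Implicit Defensive.

(* Vertices of T_d: pairs (a,b) with 0 <= b <= a <= d, standing for a*alpha1 + b*alpha2. *)
Definition vtx (d : nat) := {p : 'I_d.+1 * 'I_d.+1 | (p.2 <= p.1)%N}.

(* Adjacency in the triangular lattice: unit distance iff the coordinate
   difference is +-(1,0), +-(0,1) or +-(1,1). T_d is the induced subgraph. *)
Definition tadj (d : nat) : rel (vtx d) := fun x y =>
  let a := nat_of_ord (val x).1 in let b := nat_of_ord (val x).2 in
  let c := nat_of_ord (val y).1 in let e := nat_of_ord (val y).2 in
  [|| (c == a.+1) && (e == b), (a == c.+1) && (b == e),
      (c == a) && (e == b.+1), (a == c) && (b == e.+1),
      (c == a.+1) && (e == b.+1) | (a == c.+1) && (b == e.+1)].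

Definition within (d k : nat) (x y : vtx d) : bool :=
  [exists n : 'I_k.+1, [exists t : n.-tuple (vtx d),
     path (@tadj d) x t && (last x t == y)]].

Definition dominating (d k : nat) (D : {set vtx d}) : bool :=
  [forall v : vtx d, [exists u in D, within k u v]].

(* gamma_k(T_d): minimum size of a distance-k dominating set
   (the full vertex set is always one, so the arg min is well defined). *)
Definition gamma (k d : nat) : nat :=
  #|[arg min_(D < [set: vtx d] | dominating k D) #|D| ]|.

(* Write a vertex as (a, b), so that the graph distance of the triangular lattice
   between points differing by (x, y) is max(|x|, |y|, |x - y|).  For
   D = 3k^2 + 3k + 1 the sublattice a = (3k+2) b (mod D) is a perfect code: the
   balls of radius k around its points cover the plane.  Clamping these lattice
   points into T_d is 1-Lipschitz, so those lying within distance k of T_d give a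
   distance-k dominating set.  In the coordinates X = a - b, Y = b they are the
   lattice points of the triangle X >= -k, Y >= -k, X + Y <= D q + k, which we
   count residue class by residue class of Y mod D: the class s contributes a
   triangle of points whose size depends only on where rho(s) = (3k+1) s mod D and
   s sit in [0, D).  The classes with rho(s) + s > D + k lose a row; the symmetry
   s -> -s and the bijectivity of multiplication by 3k+1 and 3k+2 modulo D show
   that there are about 3k^2/2 of them, which gives the bound. *)

From Stdlib Require Import ZArith Lia.
From mathcomp Require Import all_boot zify.

Definition va {d} (x : vtx d) : nat := (val x).1.
Definition vb {d} (x : vtx d) : nat := (val x).2.

Lemma vtx_bounds {d} (x : vtx d) : vb x <= va x <= d.
Proof. by case: x => [[a b] /= hba]; rewrite /va /vb /= hba -ltnS ltn_ord. Qed.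

Lemma vtx_coord_inj {d} (x y : vtx d) : va x = va y -> vb x = vb y -> x = y.
Proof.
case: x y => [[a b] ?] [[a' b'] ?] /= ea eb.
by apply: val_inj; congr pair; apply: val_inj.
Qed.

Definition mkv d (a b : nat) : vtx d :=
  insubd (exist _ (ord0, ord0) (leqnn 0)) (inord a, inord b).

Lemma mkv_coord {d a b} : b <= a <= d -> va (mkv d a b) = a /\ vb (mkv d a b) = b.
Proof.
move=> hab; have ha : a < d.+1 by lia.
have hb : b < d.+1 by lia.
by rewrite /mkv /va /vb insubdK /= ?inordK // unfold_in /= !inordK //; lia.
Qed.

Definition tri_adj (a b c e : nat) : bool :=
  [|| (c == a.+1) && (e == b), (a == c.+1) && (b == e),
      (c == a) && (e == b.+1), (a == c) && (b == e.+1),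
      (c == a.+1) && (e == b.+1) | (a == c.+1) && (b == e.+1)].

Lemma tadjE {d} (x y : vtx d) : tadj x y = tri_adj (va x) (vb x) (va y) (vb y).
Proof. by []. Qed.

Definition hexn (x y : Z) : Z := Z.max (Z.abs x) (Z.max (Z.abs y) (Z.abs (x - y))).

Definition hexd {d} (x y : vtx d) : Z :=
  hexn (Z.of_nat (va y) - Z.of_nat (va x)) (Z.of_nat (vb y) - Z.of_nat (vb x)).

Lemma hexd_step {d} {x y : vtx d} :
  x <> y -> exists2 z, tadj x z & hexd z y = (hexd x y - 1)%Z.
Proof.
move=> nxy; have /andP[bx ax] := vtx_bounds x; have /andP[byy ay] := vtx_bounds y.
have {}nxy : va x <> va y \/ vb x <> vb y.
  case: (eqVneq (va x) (va y)) => [ea|/eqP]; last by left.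
  by right => eb; apply: nxy; apply: vtx_coord_inj.
suff [a [b [hab adj dist]]] : exists a b, [/\ b <= a <= d, tri_adj (va x) (vb x) a b &
    hexn (Z.of_nat (va y) - Z.of_nat a) (Z.of_nat (vb y) - Z.of_nat b) = (hexd x y - 1)%Z].
  have [ea eb] := mkv_coord hab.
  by exists (mkv d a b); rewrite ?tadjE /hexd ea eb.
rewrite /tri_adj /hexd /hexn.
have [lta|gea] := ltnP (va x) (va y); [|have [gta|eqa] := ltnP (va y) (va x)].
- have [ltb|geb] := ltnP (vb x) (vb y).
  + by exists (va x).+1, (vb x).+1; split; lia.
  + by exists (va x).+1, (vb x); split; lia.
- have [ltb|geb] := ltnP (vb y) (vb x).
  + by exists (va x).-1, (vb x).-1; split; lia.
  + by exists (va x).-1, (vb x); split; lia.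
- have [ltb|geb] := ltnP (vb x) (vb y).
  + by exists (va x), (vb x).+1; split; lia.
  + by exists (va x), (vb x).-1; split; lia.
Qed.

Lemma hexd_walk {d} k (x y : vtx d) : (hexd x y <= Z.of_nat k)%Z ->
  exists t, [/\ size t <= k, path (@tadj d) x t & last x t = y].
Proof.
elim: k x => [|k IH] x hk.
  exists [::]; split => //=; apply: vtx_coord_inj; move: hk; rewrite /hexd /hexn; lia.
have [->|/eqP nxy] := eqVneq x y; first by exists [::].
have [z xz zy] := hexd_step nxy.
have [t [st pt lt]] := IH z ltac:(lia).
by exists (z :: t); rewrite /= xz.
Qed.

Lemma within_hexd {d} k (x y : vtx d) : (hexd x y <= Z.of_nat k)%Z -> within k x y.
Proof.
move=> /hexd_walk[t [st pt lt]].
apply/existsP; exists (Ordinal (st : size t < k.+1)).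
by apply/existsP; exists (in_tuple t); rewrite /= pt lt eqxx.
Qed.

Local Open Scope Z_scope.

Definition retract_a (d : nat) (a b : Z) : Z := Z.min (Z.max a (Z.max b 0)) (Z.of_nat d).
Definition retract_b (d : nat) (a b : Z) : Z := Z.min (Z.max b 0) (Z.of_nat d).

Lemma hexn_retract d a b a' b' :
  hexn (retract_a d a' b' - retract_a d a b) (retract_b d a' b' - retract_b d a b)
  <= hexn (a' - a) (b' - b).
Proof.
have max_b x y x' y' : hexn (x' - x) (Z.max y' 0 - Z.max y 0) <= hexn (x' - x) (y' - y).
  by rewrite /hexn; lia.
have max_a x y x' y' : hexn (Z.max x' y' - Z.max x y) (y' - y) <= hexn (x' - x) (y' - y).
  by rewrite /hexn; lia.
have min_a x y x' y' :
    hexn (Z.min x' (Z.of_nat d) - Z.min x (Z.of_nat d)) (y' - y) <= hexn (x' - x) (y' - y).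
  by rewrite /hexn; lia.
have min_b x y x' y' :
    hexn (x' - x) (Z.min y' (Z.of_nat d) - Z.min y (Z.of_nat d)) <= hexn (x' - x) (y' - y).
  by rewrite /hexn; lia.
rewrite /retract_a /retract_b.
apply: Z.le_trans (min_b _ _ _ _) _; apply: Z.le_trans (min_a _ _ _ _) _.
apply: Z.le_trans (max_a _ _ _ _) _; exact: max_b.
Qed.

Definition retract d (a b : Z) : vtx d :=
  mkv d (Z.to_nat (retract_a d a b)) (Z.to_nat (retract_b d a b)).

Lemma retract_coord d a b : Z.of_nat (va (retract d a b)) = retract_a d a b /\
  Z.of_nat (vb (retract d a b)) = retract_b d a b.
Proof.
have [-> ->] : va (retract d a b) = Z.to_nat (retract_a d a b) /\
               vb (retract d a b) = Z.to_nat (retract_b d a b).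
  by apply: mkv_coord; rewrite /retract_a /retract_b; lia.
by rewrite /retract_a /retract_b; lia.
Qed.

Lemma retract_vtx d (x : vtx d) : retract d (Z.of_nat (va x)) (Z.of_nat (vb x)) = x.
Proof.
have [ea eb] := retract_coord d (Z.of_nat (va x)) (Z.of_nat (vb x)).
have /andP[bx ax] := vtx_bounds x.
by apply: vtx_coord_inj; move: ea eb; rewrite /retract_a /retract_b; lia.
Qed.

Lemma within_retract d k (x : vtx d) a b :
  hexn (Z.of_nat (va x) - a) (Z.of_nat (vb x) - b) <= Z.of_nat k ->
  within k (retract d a b) x.
Proof.
move=> near; apply: within_hexd; rewrite -[x in hexd _ x]retract_vtx /hexd.
have [-> ->] := retract_coord d a b.
have [-> ->] := retract_coord d (Z.of_nat (va x)) (Z.of_nat (vb x)).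
exact: Z.le_trans (hexn_retract _ _ _ _ _) near.
Qed.

(** * A perfect code in the triangular lattice *)

Definition Dk (k : nat) : nat := 3 * k ^ 2 + 3 * k + 1.

Definition on_lattice (k : nat) (a b : Z) : Prop :=
  (Z.of_nat (Dk k) | a - (3 * Z.of_nat k + 2) * b).

Lemma on_lattice0 k : on_lattice k 0 0.
Proof. by exists 0; ring. Qed.

Lemma on_latticeD k a b a' b' :
  on_lattice k a b -> on_lattice k a' b' -> on_lattice k (a + a') (b + b').
Proof.
rewrite /on_lattice => h h'.
by rewrite (_ : _ - _ = a - (3 * Z.of_nat k + 2) * b + (a' - (3 * Z.of_nat k + 2) * b'));
  [exact: Z.divide_add_r | ring].
Qed.

(* The six lattice points at distance 2k + 1 from 0 lie one in each sector
   between consecutive lattice directions; subtracting the one in the sector of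
   (a, b) gets closer to 0, once each sector is made half-open. *)
Lemma hexn_descent {k a b} : (1 <= k)%N -> Z.of_nat k < hexn a b ->
  exists a' b', on_lattice k a' b' /\ hexn (a - a') (b - b') < hexn a b.
Proof.
rewrite /on_lattice /Dk /hexn => k1 far; set K := Z.of_nat k.
have [?|[?|[?|[?|[?|?]]]]] : 0 < b <= a \/ 0 <= a < b \/ a < 0 <= b \/
    a <= b < 0 \/ b < a <= 0 \/ b <= 0 < a by lia.
- by exists (2 * K + 1), (K + 1); split; [exists (-1) | ]; lia.
- by exists K, (2 * K + 1); split; [exists (-2) | ]; lia.
- by exists (- (K + 1)), K; split; [exists (-1) | ]; lia.
- by exists (- (2 * K + 1)), (- (K + 1)); split; [exists 1 | ]; lia.
- by exists (- K), (- (2 * K + 1)); split; [exists 2 | ]; lia.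
- by exists (K + 1), (- K); split; [exists 1 | ]; lia.
Qed.

Lemma lattice_cover {k} a b : (1 <= k)%N ->
  exists a' b', on_lattice k a' b' /\ hexn (a - a') (b - b') <= Z.of_nat k.
Proof.
move=> k1; have [n] := ubnP (Z.to_nat (hexn a b)).
elim: n a b => // n IH a b hn.
have [near|far] := Z.le_gt_cases (hexn a b) (Z.of_nat k).
  by exists 0, 0; split; [exact: on_lattice0 | rewrite !Z.sub_0_r].
have [a1 [b1 [l1 closer]]] := hexn_descent k1 far.
have [a2 [b2 [l2 h2]]] := IH (a - a1) (b - b1) ltac:(rewrite /hexn in closer hn *; lia).
exists (a1 + a2), (b1 + b2); split; first exact: on_latticeD.
by rewrite !Z.sub_add_distr.
Qed.

Local Close Scope Z_scope.

Lemma mulmod_inj {D c} {s t : 'I_D} : coprime D c -> c * s = c * t %[mod D] -> s = t.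
Proof.
wlog st : s t / s <= t => [W cop e|cop e].
  by case: (leqP s t) => [|/ltnW] st; [|symmetry]; apply: W.
have dv : D %| t - s.
  rewrite -(Gauss_dvdr _ cop) mulnBr -eqn_mod_dvd ?e //.
  by rewrite leq_mul2l st orbT.
apply: ord_inj; have := ltn_ord t; case: (posnP (t - s)) => [|/dvdn_leq/(_ dv)]; lia.
Qed.

Lemma mulmod_gt0 {D c s} : coprime D c -> 0 < s < D -> 0 < c * s %% D.
Proof.
move=> cop /andP[s0 sD]; rewrite lt0n -/(dvdn _ _) (Gauss_dvdr _ cop).
by apply: contraTN sD => /(dvdn_leq s0); rewrite -leqNgt.
Qed.

Lemma big_mulmod {R : Type} {idx : R} {op : Monoid.com_law idx} {D c} (F : nat -> R) :
  0 < D -> coprime D c -> \big[op/idx]_(s < D) F (c * s %% D) = \big[op/idx]_(s < D) F s.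
Proof.
move=> D0 cop; pose f (s : 'I_D) := Ordinal (ltn_pmod (c * s) D0).
have inj_f : injective f by move=> s t /(congr1 val) /= /(mulmod_inj cop).
by rewrite [RHS](reindex_inj inj_f).
Qed.

Lemma sum_interval n a k : \sum_(i < n) (a <= i < a + k : nat) = minn n (a + k) - minn n a.
Proof. by elim: n => [|n IH]; rewrite ?big_ord0 ?big_ord_recr ?IH /=; lia. Qed.

(** * The dominating set *)

Definition rho k s := (3 * k + 1) * s %% Dk k.

Lemma Dk_gt k : k < Dk k.
Proof. rewrite /Dk; lia. Qed.

Lemma Dk_gt0 k : 0 < Dk k.
Proof. exact: leq_ltn_trans (Dk_gt k). Qed.

Lemma rho_lt k s : rho k s < Dk k.
Proof. by rewrite /rho ltn_mod Dk_gt0. Qed.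

Lemma lattice_class {k a b} : on_lattice k a b ->
  exists s i j, [/\ s < Dk k, (a - b = Z.of_nat (rho k s) + Z.of_nat (Dk k) * i)%Z
                  & (b = Z.of_nat s + Z.of_nat (Dk k) * j)%Z].
Proof.
case=> t ht; set D := Z.of_nat (Dk k); have eD : D = Z.of_nat (Dk k) by [].
have Dpos : (0 < D)%Z by rewrite eD /Dk; lia.
have := Z.mod_pos_bound b D Dpos; have := Z.div_mod b D ltac:(lia).
move: (b / D)%Z (b mod D)%Z => j m eb m_bnd.
have er := divn_eq ((3 * k + 1) * Z.to_nat m) (Dk k); rewrite -/(rho k _) in er.
exists (Z.to_nat m), (t + Z.of_nat ((3 * k + 1) * Z.to_nat m %/ Dk k)
                      + (3 * Z.of_nat k + 1) * j)%Z, j.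
split; [lia | | lia].
by rewrite {}eb in ht *; lia.
Qed.

Lemma layer_lower {D r k : nat} {i : Z} : r < D -> k < D ->
  (- Z.of_nat k <= Z.of_nat r + Z.of_nat D * i -> - Z.of_nat (D <= r + k) <= i)%Z.
Proof. by case: leqP => /= ? ? ? ?; nia. Qed.

Definition cut (D k t : nat) : nat := if D + k < t then 2 else if k < t then 1 else 0.

Lemma layer_upper {D k : nat} (Q t : nat) (n : Z) : k < D ->
  (Z.of_nat t + Z.of_nat D * n <= Z.of_nat D * Z.of_nat Q + Z.of_nat k ->
   n + Z.of_nat (cut D k t) <= Z.of_nat Q)%Z.
Proof.
rewrite /cut => kD; case: ltnP => [big|_]; last case: ltnP => [pos|small]; move=> /= h; nia.
Qed.

Definition below (k t : nat) : bool := Dk k <= t + k.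

(* The lattice points with Y = s (mod D) are (X, Y) = (rho s + D i, s + D j), and
   the triangle X >= -k, Y >= -k, X + Y <= D Q + k becomes
   i >= -below (rho s), j >= -below s, i + j <= Q - cut (rho s + s): a triangle
   with [layers k Q s] rows, indexed by u = i + below (rho s), w = j + below s. *)
Definition layers k Q s : nat :=
  Q + 1 + below k (rho k s) + below k s - cut (Dk k) k (rho k s + s).

Definition class_point k d s (p : nat * nat) : vtx d :=
  let Y := (Z.of_nat s + Z.of_nat (Dk k) * (Z.of_nat p.2 - Z.of_nat (below k s)))%Z in
  let X := (Z.of_nat (rho k s)
            + Z.of_nat (Dk k) * (Z.of_nat p.1 - Z.of_nat (below k (rho k s))))%Z in
  retract d (X + Y) Y.

Fixpoint triangle (n : nat) : seq (nat * nat) :=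
  if n is m.+1 then triangle m ++ [seq (i, m - i) | i <- iota 0 m.+1] else [::].

Lemma triangleS n : triangle n.+1 = triangle n ++ [seq (i, n - i) | i <- iota 0 n.+1].
Proof. by []. Qed.

Lemma mem_triangle n u w : u + w < n -> (u, w) \in triangle n.
Proof.
elim: n => [|n IH] // uwn; rewrite triangleS mem_cat.
have [/IH -> //|uwn'] := ltnP (u + w) n.
by apply/orP; right; apply/mapP; exists u; [rewrite mem_iota | congr pair]; lia.
Qed.

Lemma size_triangle n : (size (triangle n)).*2 = n * n.+1.
Proof. by elim: n => // n IH; rewrite triangleS size_cat size_map size_iota doubleD IH; lia. Qed.

Definition cover_seq k Q d : seq (vtx d) :=
  [seq class_point k d s p | s <- iota 0 (Dk k), p <- triangle (layers k Q s)].

Lemma cover_dominating {k Q d} : 1 <= k -> d <= Dk k * Q ->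
  dominating k [set x in cover_seq k Q d].
Proof.
move=> k1 dQ; apply/forallP => v; have /andP[bv av] := vtx_bounds v.
have [a [b [lat near]]] := lattice_cover (Z.of_nat (va v)) (Z.of_nat (vb v)) k1.
have [s [i [j [sD eX eY]]]] := lattice_class lat.
have kD := Dk_gt k; have rD := rho_lt k s.
move: near; rewrite /hexn => near.
have iX : (- Z.of_nat (below k (rho k s)) <= i)%Z by apply: layer_lower rD kD _; lia.
have jY : (- Z.of_nat (below k s) <= j)%Z by apply: layer_lower sD kD _; lia.
have ij : (i + j + Z.of_nat (cut (Dk k) k (rho k s + s)) <= Z.of_nat Q)%Z.
  by apply: layer_upper kD _; lia.
apply/existsP; exists (class_point k d s (Z.to_nat (i + Z.of_nat (below k (rho k s))),
                                        Z.to_nat (j + Z.of_nat (below k s)))).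
rewrite inE; apply/andP; split.
  apply/allpairsPdep; do 2!eexists; split; last reflexivity; first by rewrite mem_iota.
  by apply: mem_triangle; rewrite /layers /below in ij iX jY *; lia.
rewrite /class_point /= !Z2Nat.id; [|lia..].
by apply: within_retract; rewrite /hexn; lia.
Qed.

(** * Counting the dominating set *)

Section Residues.
Variable k : nat.
Local Notation D := (Dk k).

Lemma coprime_Dk : coprime D ((3 * k + 1) * (3 * k + 2)).
Proof.
set P := (3 * k + 1) * (3 * k + 2); have e : 3 * D - P = 1 by rewrite /P /Dk; lia.
rewrite /coprime -dvdn1 -e.
by apply: dvdn_sub; [apply/dvdn_mull/dvdn_gcdl | apply: dvdn_gcdr].
Qed.

Lemma coprime_Dk_3k1 : coprime D (3 * k + 1).
Proof. by have := coprime_Dk; rewrite coprimeMr => /andP[]. Qed.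

Lemma coprime_Dk_3k2 : coprime D (3 * k + 2).
Proof. by have := coprime_Dk; rewrite coprimeMr => /andP[]. Qed.

Lemma rho0 : rho k 0 = 0.
Proof. by rewrite /rho muln0 mod0n. Qed.

Lemma rho_small s : s <= k -> rho k s = (3 * k + 1) * s.
Proof. by move=> sk; rewrite /rho modn_small // /Dk; nia. Qed.

Lemma rho_mid s : k < s <= 2 * k -> rho k s = (3 * k + 1) * s - D.
Proof.
move=> sk; rewrite /rho -[X in X %% _](@subnK D) ?(modnDr, modn_small) // /Dk; nia.
Qed.

Lemma rho_opp s : 0 < s < D -> rho k (D - s) = D - rho k s.
Proof.
move=> sD; have r0 : 0 < rho k s := mulmod_gt0 coprime_Dk_3k1 sD.
have rD := rho_lt k s.
have e := divn_eq ((3 * k + 1) * s) D; rewrite -/(rho k s) in e.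
move: ((3 * k + 1) * s %/ D) e => q e.
have q3k : q <= 3 * k by nia.
rewrite /rho (_ : (3 * k + 1) * (D - s) = (3 * k - q) * D + (D - rho k s)); last by nia.
by rewrite modnMDl modn_small //; lia.
Qed.

Lemma rho_add_gt s : 0 < s -> k < rho k s + s.
Proof. by move=> s0; case: (leqP s k) => [sk|]; [rewrite rho_small //; nia | lia]. Qed.

Definition overflow s : bool := D + k < rho k s + s.
Definition underflow s : bool := (0 < s) && (rho k s + s + k < D).
Definition thin s : bool := [&& overflow s, ~~ below k (rho k s) & ~~ below k s].

Lemma below_overflow s : s < D -> below k s -> overflow s && ~~ below k (rho k s).
Proof.
rewrite /below /overflow => sD bs.
have [t [t0 tk ->]] : exists t, [/\ 0 < t, t <= k & s = D - t] by exists (D - s); split; lia.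
rewrite rho_opp ?rho_small // /Dk; first by nia.
by apply/andP; split; rewrite /Dk; nia.
Qed.

Lemma below_rho_overflow s : 0 < s < D -> below k (rho k s) -> overflow s && ~~ below k s.
Proof.
move=> /andP[s0 sD]; have [sk|ks] := leqP s k.
  by rewrite /below rho_small // /Dk; nia.
have [s2k|ks2] := leqP s (2 * k).
  by rewrite /below rho_mid ?ks // /Dk; nia.
have [bs|nbs] := boolP (below k s).
  by have /andP[_ /negPf->] := below_overflow s sD bs.
by move: nbs; rewrite /below /overflow; lia.
Qed.

Lemma layers0 Q : layers k Q 0 = Q.+1.
Proof. by rewrite /layers /below /cut rho0 !add0n leqNgt Dk_gt !ltn0 /= !addn0 subn0 addn1. Qed.

Lemma layers_thin Q s : 0 < Q -> 0 < s < D -> layers k Q s + thin s <= Q.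
Proof.
move=> Q0 sD; have := below_rho_overflow s sD; have := below_overflow s (proj2 (andP sD)).
rewrite /layers /thin /cut -/(overflow s) rho_add_gt; last by case/andP: sD.
by case: (overflow s); case: (below k (rho k s)); case: (below k s) => //=; lia.
Qed.

Lemma layers_sq_bound Q s : 0 < Q -> s < D ->
  layers k Q s * (layers k Q s).+1 + 2 * Q * thin s <= Q * Q.+1 + (2 * Q + 2) * (s < 1).
Proof.
move=> Q0 sD; case: (posnP s) => [->|s0].
  by rewrite layers0 /thin /overflow rho0 ltn0 /=; nia.
have := layers_thin Q s Q0 (introT andP (conj s0 sD)).
by case: (thin s) => /= lQ; nia.
Qed.

Lemma sum_below : \sum_(t < D) below k t = k.
Proof.
rewrite (eq_bigr (fun t : 'I_D => (D - k <= t < D - k + k : nat))) => [|t _].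
  by rewrite sum_interval; have := Dk_gt k; lia.
by have := ltn_ord t; have := Dk_gt k; rewrite /below; lia.
Qed.

Lemma sum_below_rho : \sum_(s < D) below k (rho k s) = k.
Proof. by rewrite (big_mulmod (fun t => below k t : nat)) ?sum_below ?Dk_gt0 ?coprime_Dk_3k1. Qed.

(* Multiplication by D - 1, i.e. s -> -s, exchanges the two kinds of classes. *)
Lemma sum_overflow : \sum_(s < D) overflow s = \sum_(s < D) underflow s.
Proof.
rewrite -(big_mulmod (fun t => underflow t : nat) (Dk_gt0 k) (coprimenP (Dk_gt0 k))).
apply: eq_bigr => s _; have sD := ltn_ord s; case: (posnP s) => [->|s0].
  by rewrite muln0 mod0n /overflow /underflow rho0 addn0 ltn0.
have -> : D.-1 * s %% D = D - s.
  by rewrite (_ : D.-1 * s = s.-1 * D + (D - s)) ?modnMDl ?modn_small; nia.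
by have := rho_lt k s; rewrite /overflow /underflow rho_opp ?s0 //=; lia.
Qed.

Definition balanced s : bool := [&& 0 < s, ~~ overflow s & ~~ underflow s].

(* A balanced class has rho s + s within k of D, and rho s + s = (3k + 2) s
   (mod D); multiplication by 3k + 2 permutes the residues, and only 2k nonzero
   residues are within k of 0. *)
Lemma sum_balanced : \sum_(s < D) balanced s <= 2 * k.
Proof.
pose tau s := (3 * k + 2) * s %% D.
suff le_bal : forall s : 'I_D,
    balanced s <= (D - k <= tau s < D - k + k) + (1 <= tau s < 1 + k).
  apply: (@leq_trans (\sum_(s < D) ((D - k <= tau s < D - k + k) + (1 <= tau s < 1 + k))));
    first by apply: leq_sum => s _; apply: le_bal.
  rewrite big_split /=.
  rewrite !(big_mulmod (fun t => (_ <= t < _ + _ : nat)) (Dk_gt0 k) coprime_Dk_3k2).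
  by rewrite !sum_interval; have := Dk_gt k; lia.
move=> s; rewrite /balanced; case: (posnP s) => [-> //|s0] /=.
have tau0 : 0 < tau s by apply: mulmod_gt0 coprime_Dk_3k2 _; rewrite s0 ltn_ord.
have tauE : tau s = if rho k s + s < D then rho k s + s else rho k s + s - D.
  rewrite /tau (_ : (3 * k + 2) * s = (3 * k + 1) * s + s); last by lia.
  rewrite -modnDml -/(rho k s); have := rho_lt k s; have := ltn_ord s.
  case: (ltnP (rho k s + s) D) => h * /=; first by rewrite modn_small.
  by rewrite -[X in X %% _](subnK h) modnDr modn_small //; lia.
move: tau0; rewrite tauE /overflow /underflow s0 /=; have := rho_lt k s.
by case: (ltnP (rho k s + s) D) => /= *; lia.
Qed.

Lemma sum_thin : 3 * k ^ 2 <= 2 * \sum_(s < D) thin s + 3 * k.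
Proof.
have part : \sum_(s < D) (0 < s : nat) =
            \sum_(s < D) overflow s + \sum_(s < D) underflow s + \sum_(s < D) balanced s.
  rewrite -!big_split; apply: eq_bigr => s _ /=; rewrite /balanced.
  case: (posnP s) => [->|s0]; first by rewrite /overflow /underflow rho0.
  have : ~~ (overflow s && underflow s) by rewrite /overflow /underflow; lia.
  by case: (overflow s); case: (underflow s).
have pos : \sum_(s < D) (0 < s : nat) = D - 1.
  rewrite (eq_bigr (fun s : 'I_D => (1 <= s < 1 + D : nat))) => [|s _].
    by rewrite sum_interval; have := Dk_gt0 k; lia.
  by have := ltn_ord s; lia.
have ov : \sum_(s < D) overflow s <=
    \sum_(s < D) thin s + \sum_(s < D) below k (rho k s) + \sum_(s < D) below k s.
  rewrite -!big_split; apply: leq_sum => s _ /=; rewrite /thin.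
  by case: (overflow s); case: (below k (rho k s)); case: (below k s).
rewrite sum_below sum_below_rho in ov; rewrite -sum_overflow in part.
have : D = 3 * k ^ 2 + 3 * k + 1 by [].
by have := sum_balanced; lia.
Qed.

End Residues.

Lemma size_cover k Q d :
  (size (cover_seq k Q d)).*2 = \sum_(s < Dk k) layers k Q s * (layers k Q s).+1.
Proof.
rewrite size_allpairs_dep sumnE big_map -mul2n big_distrr /=.
rewrite (_ : iota 0 (Dk k) = index_iota 0 (Dk k)) ?big_mkord; last by rewrite /index_iota subn0.
by apply: eq_bigr => s _; rewrite mul2n size_triangle.
Qed.

Lemma sum_layers k Q : 0 < Q ->
  \sum_(s < Dk k) layers k Q s * (layers k Q s).+1 <= Dk k * Q ^ 2 + (6 * k + 3) * Q + 2.
Proof.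
move=> Q0.
have bound : \sum_(s < Dk k) layers k Q s * (layers k Q s).+1
             + 2 * Q * \sum_(s < Dk k) thin k s <= Dk k * (Q * Q.+1) + (2 * Q + 2).
  rewrite big_distrr -big_split /=.
  apply: (@leq_trans (\sum_(s < Dk k) (Q * Q.+1 + (2 * Q + 2) * (s < 1)))).
    by apply: leq_sum => s _; apply: layers_sq_bound.
  rewrite big_split /= sum_nat_const card_ord -big_distrr /=.
  by have := sum_interval (Dk k) 0 1; rewrite /= => ->; have := Dk_gt0 k; lia.
have := sum_thin k; have : Dk k = 3 * k ^ 2 + 3 * k + 1 by [].
by nia.
Qed.

Lemma gamma_le_card {k d} {S : {set vtx d}} : dominating k S -> gamma k d <= #|S|.
Proof.
move=> domS; rewrite /gamma; case: arg_minnP => [|D _ /(_ S domS) //].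
apply/forallP => v; apply/existsP; exists v; rewrite inE /=.
by apply: within_hexd; rewrite /hexd /hexn; lia.
Qed.

Lemma gamma_le k Q d : 1 <= k -> 0 < Q -> d <= Dk k * Q ->
  2 * gamma k d <= Dk k * Q ^ 2 + (6 * k + 3) * Q + 2.
Proof.
move=> k1 Q0 dQ; apply: leq_trans _ (sum_layers k Q Q0).
rewrite -(size_cover k Q d) mul2n leq_double.
apply: leq_trans (gamma_le_card (cover_dominating k1 dQ)) _.
by rewrite cardsE card_size.
Qed.

Theorem theorem1 (k q beta : nat) :
  (1 <= k)%N -> (1 <= q)%N -> (beta <= (3 * k ^ 2 + 3 * k + 1) - 1)%N ->
  let Dk := (3 * k ^ 2 + 3 * k + 1)%N in
  let d := (Dk * q + beta)%N in
  (2 * gamma k d <=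
     (if beta == 0 then Dk * q ^ 2 + (6 * k + 3) * q + 2
      else Dk * (q + 1) ^ 2 + (6 * k + 3) * (q + 1) + 2))%N.
Proof.
move=> k1 q1 beta_lt /=; case: eqP => [->|beta0].
  by apply: gamma_le; rewrite ?addn0.
by apply: gamma_le; rewrite ?addn1 // /Dk; nia.
Qed.
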